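(* Let $G$ be an almost well-covered graph. Then $G_2$ is a complete graph (equivalently, the vertices of type $2$ are pairwise adjacent).
   Context: All graphs are finite and simple. For a graph $G$, $\alpha(G)$ is the maximum size of an independent set and $i(G)$ the minimum size of an inclusion-maximal independent set; $G$ is almost well-covered if $\alpha(G)-i(G)=1$. Types of vertices: let $U$ be the set of vertices of $G$ whose connected component is a complete graph. In $G-U$, vertices of degree $1$ are leaves and the others are internal vertices. An internal vertex adjacent to exactly $k$ leaves is of type $k$; every vertex of $U$ is of type $0$. $G_2$ denotes the subgraph of $G$ induced by all vertices of type $2$ (the null graph counts as complete). *)

From mathcomp Require Import all_boot.
Set Implicit Arguments. Unset Strict Implicit. Unset Printing Implicit Defensive.

Definition simple_graph (T : finType) (e : rel T) : Prop :=
  symmetric e /\ irreflexive e.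

Section Graph.
Variables (T : finType) (e : rel T).

Definition independent (A : {set T}) : bool :=
  [forall x in A, forall y in A, ~~ e x y].

Definition maximal_independent (A : {set T}) : bool :=
  independent A && [forall x, (x \notin A) ==> ~~ independent (x |: A)].

Definition alpha : nat := \max_(A : {set T} | independent A) #|A|.

(* i(G): minimum size of a maximal independent set (all such sizes are <= #|T|) *)
Definition imin : nat := \big[minn/#|T|]_(A : {set T} | maximal_independent A) #|A|.

Definition almost_well_covered : Prop := (alpha - imin = 1)%N.

Definition component (v : T) : {set T} := [set w | connect e v w].

Definition is_complete (A : {set T}) : bool :=
  [forall x in A, forall y in A, (x != y) ==> e x y].

Definition U : {set T} := [set v | is_complete (component v)].

Definition degGU (v : T) : nat := #|[set w | e v w & w \notin U]|.

Definition leaf (v : T) : bool := (v \notin U) && (degGU v == 1%N).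
Definition internal (v : T) : bool := (v \notin U) && (degGU v != 1%N).

Definition nleaves (v : T) : nat := #|[set w | e v w & leaf w]|.

Definition of_type (k : nat) (v : T) : bool :=
  (internal v && (nleaves v == k)) || ((v \in U) && (k == 0%N)).

Definition G_type_complete (k : nat) : Prop :=
  forall x y, of_type k x -> of_type k y -> x != y -> e x y.

End Graph.

From mathcomp Require Import all_boot order zify.
Set Implicit Arguments. Unset Strict Implicit. Unset Printing Implicit Defensive.

(* Every neighbour of a leaf lies outside U, so a leaf is adjacent to nothing
   but its parent.  Hence in an independent set S, internal vertices X of S
   can be traded for all their leaves without losing independence.  If two
   type-2 vertices x, y were non-adjacent, extend {x, y} to a maximal
   independent set S, so that i <= #|S|, and trade x, y for their four leaves:
   this gives an independent set with #|S| + 2 elements, so alpha - i >= 2. *)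

Section IndependentSets.
Variables (T : finType) (e : rel T).

Lemma independentP (A : {set T}) :
  reflect (forall x y, x \in A -> y \in A -> ~~ e x y) (independent e A).
Proof.
apply: (iffP forallP) => [indA x y xA yA | indA x].
  by move: (indA x); rewrite xA => /forall_inP; apply.
by apply/implyP=> xA; apply/forall_inP=> y yA; apply: indA.
Qed.

Lemma independentS (A B : {set T}) :
  A \subset B -> independent e B -> independent e A.
Proof.
move=> /subsetP AB /independentP indB; apply/independentP=> x y xA yA.
by apply: indB; apply: AB.
Qed.

Lemma independentU (A B : {set T}) : symmetric e ->
  independent e A -> independent e B ->
  (forall a b, a \in A -> b \in B -> ~~ e a b) -> independent e (A :|: B).
Proof.
move=> e_sym /independentP indA /independentP indB indAB.
apply/independentP=> x y; rewrite !inE.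
case/orP=> [xA|xB] /orP[yA|yB]; first exact: indA.
- exact: indAB.
- by rewrite e_sym; apply: indAB.
- exact: indB.
Qed.

Lemma card_le_alpha (A : {set T}) : independent e A -> #|A| <= alpha e.
Proof. exact: (@leq_bigmax_cond _ (independent e) (fun B => #|B|)). Qed.

Lemma imin_le_card (A : {set T}) : maximal_independent e A -> imin e <= #|A|.
Proof.
rewrite /imin -Order.NatOrder.minEnat.
exact: (@Order.TotalTheory.bigmin_le_cond _ nat).
Qed.

Lemma maximal_independent_extension (A : {set T}) : independent e A ->
  exists2 S, maximal_independent e S & A \subset S.
Proof.
move=> indA; pose P B := independent e B && (A \subset B).
have PA : P A by rewrite /P indA subxx.
case: (@arg_maxnP _ A P (fun B => #|B|) PA) => S /andP[indS AS] Smax.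
exists S => //; rewrite /maximal_independent indS /=.
apply/forallP=> z; apply/implyP=> zS; apply/negP=> indzS.
have := Smax (z |: S); rewrite /P indzS (subset_trans AS (subsetUr _ _)).
by rewrite cardsU1 zS => /(_ isT); lia.
Qed.

End IndependentSets.

Section Leaves.
Variables (T : finType) (e : rel T).
Hypothesis e_sym : symmetric e.

Definition leaves_of (X : {set T}) : {set T} :=
  [set p | leaf e p & [exists x in X, e x p]].

Lemma mem_U_adj x y : e x y -> (x \in U e) = (y \in U e).
Proof.
move=> exy; rewrite !inE /component.
have -> // : [set w | connect e x w] = [set w | connect e y w].
apply/setP=> z; rewrite !inE.
by rewrite (same_connect (sym_connect_sym e_sym) (connect1 exy)).
Qed.

Lemma leaf_adj_unique p q r : leaf e p -> e p q -> e p r -> q = r.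
Proof.
move=> /andP[pU /eqP degp] epq epr.
have notU z : e p z -> z \notin U e by move=> epz; rewrite -(mem_U_adj epz).
have : #|[set w | e p w & w \notin U e]| <= 1 by rewrite -/(degGU e p) degp.
by move/card_le1_eqP; apply; rewrite inE ?epq ?epr notU.
Qed.

Lemma internal_not_leaf x : internal e x -> ~~ leaf e x.
Proof. by case/andP=> _ degx; rewrite /leaf negb_and degx orbT. Qed.

Lemma leaves_of_parent (X : {set T}) p q :
  p \in leaves_of X -> e p q -> q \in X.
Proof.
rewrite inE => /andP[lp /exists_inP[x xX exp]] epq.
by rewrite (leaf_adj_unique lp epq (_ : e p x)) // e_sym.
Qed.

Lemma independent_leaves_of (X : {set T}) : {in X, forall x, internal e x} ->
  independent e (leaves_of X).
Proof.
move=> Xint; apply/independentP=> p q pL qL; apply/negP=> epq.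
have qX := leaves_of_parent pL epq.
by move: qL; rewrite inE (negPf (internal_not_leaf (Xint q qX))).
Qed.

Lemma independent_swap_leaves (S X : {set T}) : independent e S ->
  {in X, forall x, internal e x} -> independent e ((S :\: X) :|: leaves_of X).
Proof.
move=> indS Xint; apply: independentU => //.
- exact: independentS (subsetDl S X) indS.
- exact: independent_leaves_of.
- move=> p q /setDP[_ pX] qL; rewrite e_sym.
  by apply/negP=> /(leaves_of_parent qL); rewrite (negPf pX).
Qed.

Lemma card_swap_leaves (S X : {set T}) : independent e S -> X \subset S ->
  #|(S :\: X) :|: leaves_of X| + #|X| = #|S| + #|leaves_of X|.
Proof.
move=> /independentP indS XS.
have notSL p : p \in leaves_of X -> p \notin S.
  rewrite inE => /andP[_ /exists_inP[x xX exp]]; apply/negP=> pS.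
  by move: exp; apply/negP/indS => //; apply: (subsetP XS).
have SXL0 : (S :\: X) :&: leaves_of X = set0.
  apply/setP=> p; rewrite in_setI in_setD in_set0.
  by apply/negP=> /andP[/andP[_ pS] /notSL]; rewrite pS.
rewrite cardsU SXL0 cards0 subn0 cardsD (setIidPr XS).
by have := subset_leq_card XS; lia.
Qed.

Lemma card_leaves_of2 x y : x != y ->
  #|leaves_of [set x; y]| = nleaves e x + nleaves e y.
Proof.
move=> nxy; rewrite /nleaves -cardsUI.
have -> : leaves_of [set x; y] =
    [set w | e x w & leaf e w] :|: [set w | e y w & leaf e w].
  apply/setP=> p; rewrite !inE; apply/idP/idP.
    case/andP=> lp /exists_inP[z]; rewrite !inE.
    by case/orP=> /eqP-> ->; rewrite lp ?orbT.
  case/orP=> /andP[ep ->]; apply/exists_inP; [exists x | exists y];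
  by rewrite ?inE ?eqxx ?orbT.
rewrite (_ : _ :&: _ = set0) ?cards0 ?addn0 //.
apply/setP=> p; rewrite !inE; apply/negP=> /andP[/andP[exp lp] /andP[eyp _]].
have epx : e p x by rewrite e_sym.
by move: nxy; rewrite (leaf_adj_unique lp epx (_ : e p y)) ?eqxx // e_sym.
Qed.

Hypothesis e_irr : irreflexive e.

Lemma imin_nleaves_le_alpha x y : x != y -> ~~ e x y ->
  internal e x -> internal e y ->
  imin e + nleaves e x + nleaves e y <= alpha e + 2.
Proof.
move=> nxy nexy ix iy.
have indxy : independent e [set x; y].
  apply/independentP=> p q; rewrite !inE => /orP[]/eqP-> /orP[]/eqP->;
  by rewrite ?e_irr // e_sym.
have intxy : {in [set x; y], forall z, internal e z}.
  by move=> z; rewrite !inE => /orP[]/eqP->.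
case: (maximal_independent_extension indxy) => S maxS xyS.
have indS : independent e S by case/andP: maxS.
have := card_swap_leaves indS xyS; rewrite cards2 nxy card_leaves_of2 //.
have := card_le_alpha (independent_swap_leaves indS intxy).
have := imin_le_card maxS.
lia.
Qed.

End Leaves.

Theorem lemma7 (T : finType) (e : rel T) :
  simple_graph e -> almost_well_covered e -> G_type_complete e 2.
Proof.
move=> [e_sym e_irr] awc x y tx ty nxy; apply/negPn/negP=> nexy.
move: tx => /orP[/andP[ix /eqP lx] | /andP[_ //]].
move: ty => /orP[/andP[iy /eqP ly] | /andP[_ //]].
have := imin_nleaves_le_alpha e_sym e_irr nxy nexy ix iy.
by move: awc; rewrite /almost_well_covered lx ly; lia.
Qed.
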